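(* Let $a>0$, $c>0$, and consider the four-dimensional system in the variables $x,y,z,b$ $$\dot x=x(1-y+cx-axz),\qquad \dot y=y(-1+x),\qquad \dot z=z(-b+ax^2),\qquad \dot b=0,$$ considered for $b>0$. If $f=f(x,y,z,b)$ is a formal first integral of this system, then $f$ is an arbitrary formal power series in the variable $b$ alone.
   Context: A formal first integral of this system is a formal power series $f\in\mathbb{C}[[x,y,z,b]]$ annihilated by the vector field $x(1-y+cx-axz)\partial_x+y(-1+x)\partial_y+z(-b+ax^2)\partial_z$ (with $\dot b=0$). *)

From mathcomp Require Import all_boot all_order all_algebra.
From mathcomp Require Import reals complex.
Set Implicit Arguments. Unset Strict Implicit. Unset Printing Implicit Defensive.
Import GRing.Theory Num.Theory.
Local Open Scope ring_scope.

(* A formal power series in C[[x,y,z,b]], given by its coefficient family: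
   f i j k l is the coefficient of x^i y^j z^k b^l. *)
Definition fps (C : Type) := nat -> nat -> nat -> nat -> C.

Section FPS.
Variable C : comRingType.

Definition mulmono (p q r s : nat) (f : fps C) : fps C :=
  fun i j k l =>
    if [&& (p <= i)%N, (q <= j)%N, (r <= k)%N & (s <= l)%N]
    then f (i - p)%N (j - q)%N (k - r)%N (l - s)%N else 0.

Definition dX (f : fps C) : fps C := fun i j k l => (i.+1)%:R * f i.+1 j k l.
Definition dY (f : fps C) : fps C := fun i j k l => (j.+1)%:R * f i j.+1 k l.
Definition dZ (f : fps C) : fps C := fun i j k l => (k.+1)%:R * f i j k.+1 l.

(* The vector field
   x(1-y+cx-axz) d/dx + y(-1+x) d/dy + z(-b+ax^2) d/dz   (and d/db coefficient 0)
   acting as a derivation on C[[x,y,z,b]]. *)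
Definition vfield (a c : C) (f : fps C) : fps C :=
  fun i j k l =>
      (mulmono 1 0 0 0 (dX f) i j k l
     - mulmono 1 1 0 0 (dX f) i j k l
     + c * mulmono 2 0 0 0 (dX f) i j k l
     - a * mulmono 2 0 1 0 (dX f) i j k l)
    + (- mulmono 0 1 0 0 (dY f) i j k l
       + mulmono 1 1 0 0 (dY f) i j k l)
    + (- mulmono 0 0 1 1 (dZ f) i j k l
       + a * mulmono 2 0 1 0 (dZ f) i j k l).

Definition formal_first_integral (a c : C) (f : fps C) : Prop :=
  forall i j k l, vfield a c f i j k l = 0.

Definition series_in_b_only (f : fps C) : Prop :=
  forall i j k l, (i, j, k) != (0%N, 0%N, 0%N) -> f i j k l = 0.
End FPS.

From mathcomp Require Import all_boot all_order all_algebra.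
From mathcomp Require Import reals complex.
From mathcomp Require Import ring zify.
Set Implicit Arguments. Unset Strict Implicit. Unset Printing Implicit Defensive.
Import Order.TTheory GRing.Theory Num.Theory.
Local Open Scope ring_scope.

(* Write f = sum_{k,l} u_{kl}(x,y) z^k b^l.  On the slice z^k b^l the vector
   field acts on u_{kl} as L_K = x(1-y+cx)d/dx + y(x-1)d/dy + K x^2 with
   K = a k, up to two coupling terms: x^2 z d/dx f, which involves the slice
   (k-1, l), and b z d/dz f, which involves the slice (k, l-1).  Inducting on
   k and then on l the couplings vanish, so it suffices that the kernel of L_K
   consists of constants (and that the constant is 0 unless K = 0).  This is
   shown by induction on the total degree i + j: the linear part x d/dx - y d/dy
   multiplies x^i y^j by i - j, which kills every non-resonant coefficient; at a
   resonance i = j the equations of the next two degrees produce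
   (i c) u_{ii} = 0, and c <> 0. *)

Section CharZero.
Variables (F : idomainType) (F0 : [pchar F] =i pred0).

Lemma natf_eq0 n : (n%:R == 0 :> F) = (n == 0)%N.
Proof. exact: (pcharf0P F).1 F0 n. Qed.

Lemma subr_natf_eq0 m n : (m%:R - n%:R == 0 :> F) = (m == n).
Proof.
wlog le_nm : m n / (n <= m)%N => [W|].
  case: (leqP n m) => [|/ltnW lt_mn]; first exact: W.
  by rewrite -oppr_eq0 opprB (eq_sym m) W.
by rewrite -natrB // natf_eq0 subn_eq0 eqn_leq le_nm andbT.
Qed.

End CharZero.

Section PlanarField.
Variables (F : comNzRingType) (c K : F).
Implicit Types (u : nat -> nat -> F).

(* [planar_field u i j] is the coefficient of x^i y^j in L_K u, split into the
   diagonal term and the terms of lower degree. *)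
Definition planar_lower u i j : F :=
  - (if j is j'.+1 then i%:R * u i j' else 0)
  + (if i is i'.+1 then (c * i'%:R + j%:R) * u i' j else 0)
  + (if i is i'.+2 then K * u i' j else 0).

Definition planar_field u i j : F := (i%:R - j%:R) * u i j + planar_lower u i j.

Definition vanish_below n u := forall i j, (i + j < n)%N -> u i j = 0.

Lemma planar_lower_eq0 u i j : vanish_below (i + j) u -> planar_lower u i j = 0.
Proof.
move=> low; rewrite /planar_lower.
by case: i low => [|[|i]] low; case: j low => [|j] low;
  rewrite ?low ?(mulr0, oppr0, addr0) //; lia.
Qed.

End PlanarField.

Section PlanarKernel.
Variables (F : idomainType) (F0 : [pchar F] =i pred0) (c K : F).
Variable u : nat -> nat -> F.
Hypotheses (c_neq0 : c != 0) (Lu0 : forall i j, planar_field c K u i j = 0).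

Lemma planar_offdiag_eq0 i j : vanish_below (i + j) u -> i != j -> u i j = 0.
Proof.
move=> low neq_ij; have /eqP := Lu0 i j.
rewrite /planar_field planar_lower_eq0 // addr0 mulf_eq0 (subr_natf_eq0 F0).
by rewrite (negbTE neq_ij) => /eqP.
Qed.

(* The equation at (m+2, m+2) has diagonal coefficient 0; adding it to the
   equations at (m+2, m+1) and (m+1, m+2) with suitable weights eliminates
   u (m+2) (m+1) and u (m+1) (m+2) and leaves (m+1) c u (m+1) (m+1). *)
Lemma planar_resonant_eq0 m : vanish_below (m.+1 + m.+1) u -> u m.+1 m.+1 = 0.
Proof.
move=> low.
have offdiag i j : (i + j = m.+1 + m.+1)%N -> i != j -> u i j = 0.
  by move=> deg; apply: planar_offdiag_eq0; rewrite deg.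
have e1 := Lu0 m.+2 m.+1; have e2 := Lu0 m.+1 m.+2; have e3 := Lu0 m.+2 m.+2.
rewrite /planar_field /planar_lower in e1 e2 e3.
rewrite [u m m.+1]low in e1; last lia.
rewrite [u m.+2 m]offdiag in e1; [|lia|lia].
rewrite [u m m.+2]offdiag in e2 e3; [|lia|lia].
have K_term : (if m is m'.+1 then K * u m' m.+2 else 0) = 0.
  by case: m {offdiag e1 e2 e3} low => // m' low; rewrite low ?mulr0 //; lia.
rewrite K_term !mulr0 oppr0 add0r !addr0 in e1 e2 e3.
set w := u m.+1 m.+1 in e1 e2 e3 *; set p := u m.+2 m.+1 in e1 e3.
set q := u m.+1 m.+2 in e2 e3.
have combination : m.+1%:R * c * w =
    (m.+2%:R - m.+2%:R) * u m.+2 m.+2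
      + (- (m.+2%:R * p) + (c * m.+1%:R + m.+2%:R) * q)
  + m.+2%:R * ((m.+2%:R - m.+1%:R) * p + (c * m.+1%:R + m.+1%:R) * w)
  + (c * m.+1%:R + m.+2%:R) * ((m.+1%:R - m.+2%:R) * q - m.+1%:R * w).
  by ring.
apply/eqP; move: combination; rewrite e1 e2 e3 !mulr0 !addr0 => /eqP.
by rewrite !mulf_eq0 (natf_eq0 F0) (negbTE c_neq0).
Qed.

Lemma planar_kernel_origin0 : u 0 0 = 0 -> forall i j, u i j = 0.
Proof.
move=> u00; suff below n : vanish_below n u.
  by move=> i j; apply: (below (i + j).+1).
elim: n => [//|n IHn] i j; rewrite ltnS leq_eqVlt => /orP[/eqP deg|]; last exact: IHn.
case: (eqVneq i j) deg => [<- | neq_ij] deg.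
  by case: i deg => [//|m] deg; apply: planar_resonant_eq0; rewrite deg.
by apply: planar_offdiag_eq0 neq_ij; rewrite deg.
Qed.

End PlanarKernel.

(* u 0 0 enters L_K u only with the coefficients 0 and K, so it may be replaced
   by 0 when K * u 0 0 = 0. *)
Lemma planar_kernel (F : idomainType) (c K : F) u :
    [pchar F] =i pred0 -> c != 0 -> K * u 0%N 0%N = 0 ->
    (forall i j, planar_field c K u i j = 0) ->
  forall i j, (i, j) != (0%N, 0%N) -> u i j = 0.
Proof.
move=> F0 c_neq0 Ku00 Lu0 i j ij_neq0.
pose v (i j : nat) : F := if (i, j) == (0%N, 0%N) then 0 else u i j.
have Lv0 p q : planar_field c K v p q = 0.
  rewrite -(Lu0 p q) /planar_field /planar_lower /v.
  by case: p => [|[|[|p]]]; case: q => [|q] //=;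
    rewrite ?Ku00 ?(subr0, mul0r, mulr0, addr0).
have := planar_kernel_origin0 F0 c_neq0 Lv0 (erefl : v 0%N 0%N = 0) i j.
by rewrite /v (negbTE ij_neq0).
Qed.

Definition slice (C : Type) (f : fps C) (k l : nat) : nat -> nat -> C :=
  fun i j => f i j k l.

Lemma vfieldE (C : comNzRingType) (a c : C) f i j k l :
  vfield a c f i j k l =
    planar_field c (a * k%:R) (slice f k l) i j
    - a * mulmono 2 0 1 0 (dX f) i j k l - mulmono 0 0 1 1 (dZ f) i j k l.
Proof.
rewrite /vfield /planar_field /planar_lower /slice /mulmono /dX /dY /dZ.
by case: i => [|[|i]]; case: j => [|j]; case: k => [|k]; rewrite /= ?subSS ?subn0; ring.
Qed.

Section Couplings.
Variables (C : comNzRingType) (f : fps C).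

Lemma mulmono_eq0 p q r s (g : fps C) :
  (forall i j k l, g i j k l = 0) -> forall i j k l, mulmono p q r s g i j k l = 0.
Proof. by move=> g0 i j k l; rewrite /mulmono; case: ifP. Qed.

Lemma x2z_dX_z0 i j l : mulmono 2 0 1 0 (dX f) i j 0 l = 0.
Proof. by rewrite /mulmono /= andbF. Qed.

Lemma x2z_dX_eq0 k l : (forall i j, (i, j) != (0%N, 0%N) -> f i j k l = 0) ->
  forall i j, mulmono 2 0 1 0 (dX f) i j k.+1 l = 0.
Proof.
move=> fkl i j; rewrite /mulmono /dX; case: ifP => // _.
by rewrite subSS !subn0 fkl ?mulr0.
Qed.

Lemma bz_dZ_b0 i j k : mulmono 0 0 1 1 (dZ f) i j k 0 = 0.
Proof. by rewrite /mulmono /= !andbF. Qed.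

Lemma bz_dZ_eq0 k l : (forall i j, f i j k.+1 l = 0) ->
  forall i j, mulmono 0 0 1 1 (dZ f) i j k.+1 l.+1 = 0.
Proof. by move=> fkl i j; rewrite /mulmono /dZ /= !subSS !subn0 fkl mulr0. Qed.

Lemma vfield_origin (a c : C) k l : vfield a c f 0 0 k l.+1 = - (k%:R * f 0 0 k l).
Proof.
rewrite /vfield /mulmono /dX /dY /dZ /=.
by case: k => [|k] /=; rewrite ?subSS ?subn0; ring.
Qed.

End Couplings.

Lemma series_in_b_only_first_integral (C : comNzRingType) (a c : C) (f : fps C) :
  series_in_b_only f -> formal_first_integral a c f.
Proof.
move=> fb i j k l.
have dX0 p q r s : dX f p q r s = 0 by rewrite /dX fb ?mulr0.
have dY0 p q r s : dY f p q r s = 0 by rewrite /dY fb ?mulr0 // !xpair_eqE andbF.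
have dZ0 p q r s : dZ f p q r s = 0 by rewrite /dZ fb ?mulr0 // !xpair_eqE andbF.
by rewrite /vfield !mulmono_eq0 // !(mulr0, oppr0, addr0).
Qed.

Lemma first_integral_slice (C : comNzRingType) (a c : C) (f : fps C) k l :
    formal_first_integral a c f ->
    (forall i j, mulmono 2 0 1 0 (dX f) i j k l = 0) ->
    (forall i j, mulmono 0 0 1 1 (dZ f) i j k l = 0) ->
  forall i j, planar_field c (a * k%:R) (slice f k l) i j = 0.
Proof.
by move=> ff x2z0 bz0 i j; have := ff i j k l; rewrite vfieldE x2z0 bz0 mulr0 !subr0.
Qed.

Lemma first_integral_series_in_b_only (F : idomainType) (a c : F) (f : fps F) :
    [pchar F] =i pred0 -> c != 0 ->
  formal_first_integral a c f -> series_in_b_only f.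
Proof.
move=> F0 c_neq0 ff.
suff fk0 k l i j : (i, j, k) != (0%N, 0%N, 0%N) -> f i j k l = 0.
  by move=> i j k l; apply: fk0.
elim: k l i j => [|k IHk] l i j.
  rewrite xpair_eqE andbT => ij_neq0.
  apply: (@planar_kernel _ c (a * 0%:R) (slice f 0 l)) ij_neq0 => //.
    by rewrite mulr0 mul0r.
  by apply: first_integral_slice => // p q; apply: x2z_dX_z0.
move=> _; have slice_k l' p q : (p, q) != (0%N, 0%N) -> f p q k l' = 0.
  by move=> pq_neq0; apply: IHk; apply: contraNneq pq_neq0; case=> -> ->.
have slice_eq0 l' : (forall p q, mulmono 0 0 1 1 (dZ f) p q k.+1 l' = 0) ->
    forall p q, f p q k.+1 l' = 0.
  move=> bz0; apply: (planar_kernel_origin0 F0 c_neq0 (K := a * k.+1%:R)).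
    exact: first_integral_slice ff (x2z_dX_eq0 (slice_k l')) bz0.
  apply/eqP; have /eqP := ff 0%N 0%N k.+1 l'.+1.
  by rewrite vfield_origin oppr_eq0 mulf_eq0 (natf_eq0 F0).
by elim: l i j => [|l IHl]; apply: slice_eq0 => p q; [exact: bz_dZ_b0 | exact: bz_dZ_eq0].
Qed.

Theorem theorem1p7 (R : realType) (a c : R) (ha : 0 < a) (hc : 0 < c)
    (f : fps R[i]) :
  formal_first_integral (a%:C)%C (c%:C)%C f <-> series_in_b_only f.
Proof.
have c_neq0 : (c%:C)%C != 0 :> R[i].
  by apply: contraTneq hc => /complexI ->; rewrite ltxx.
split; first exact: first_integral_series_in_b_only (@pchar_num _) c_neq0.
exact: series_in_b_only_first_integral.
Qed.
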